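(* If $L \subseteq a^*$ is a unary language, then $\mathbb{OGI}^*(L) = 2\mathbb{OC}^*(L)$.
   Context: Outfix-guided insertion: $x \leftarrow y = \{ x_1 u z v x_2 \mid x = x_1 u v x_2,\ y = u z v,\ u \neq \varepsilon,\ v \neq \varepsilon \}$, extended to languages by union over all pairs. $\mathbb{OGI}^{(0)}(L) = L$, $\mathbb{OGI}^{(i+1)}(L) = \mathbb{OGI}^{(i)}(L) \leftarrow \mathbb{OGI}^{(i)}(L)$, $\mathbb{OGI}^*(L) = \bigcup_{i\ge 0}\mathbb{OGI}^{(i)}(L)$. The 2-overlap catenation of strings is $x \,\overline{\odot}^2\, y = \{ uvw \mid x = uv,\ y = vw,\ u,w \in \Sigma^*,\ |v| \geq 2 \}$, extended to languages by union over all pairs. $2\mathbb{OC}^{(0)}(L) = L$, $2\mathbb{OC}^{(i+1)}(L) = 2\mathbb{OC}^{(i)}(L) \,\overline{\odot}^2\, 2\mathbb{OC}^{(i)}(L)$, and $2\mathbb{OC}^*(L) = \bigcup_{i \geq 0} 2\mathbb{OC}^{(i)}(L)$. *)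

From mathcomp Require Import all_boot.
Set Implicit Arguments. Unset Strict Implicit. Unset Printing Implicit Defensive.

Definition lang (T : Type) := seq T -> Prop.

Definition ogi_word (T : Type) (x y w : seq T) : Prop :=
  exists x1 u v x2 z,
    [/\ x = x1 ++ u ++ v ++ x2, y = u ++ z ++ v, u <> [::], v <> [::]
      & w = x1 ++ u ++ z ++ v ++ x2].

Definition ogi_lang (T : Type) (L1 L2 : lang T) : lang T :=
  fun w => exists x y, [/\ L1 x, L2 y & ogi_word x y w].

Fixpoint OGI_iter (T : Type) (L : lang T) (i : nat) : lang T :=
  match i with
  | 0 => L
  | i'.+1 => ogi_lang (OGI_iter L i') (OGI_iter L i')
  end.

Definition OGI_star (T : Type) (L : lang T) : lang T :=
  fun w => exists i, OGI_iter L i w.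

Definition oc2_word (T : Type) (x y w : seq T) : Prop :=
  exists u v w', [/\ x = u ++ v, y = v ++ w', 2 <= size v & w = u ++ v ++ w'].

Definition oc2_lang (T : Type) (L1 L2 : lang T) : lang T :=
  fun w => exists x y, [/\ L1 x, L2 y & oc2_word x y w].

Fixpoint OC2_iter (T : Type) (L : lang T) (i : nat) : lang T :=
  match i with
  | 0 => L
  | i'.+1 => oc2_lang (OC2_iter L i') (OC2_iter L i')
  end.

Definition OC2_star (T : Type) (L : lang T) : lang T :=
  fun w => exists i, OC2_iter L i w.

From mathcomp Require Import all_boot.
From mathcomp Require Import zify.

(* Over a one-letter alphabet a word is determined by its length, and both
   operations send (a^m, a^n) to exactly the words a^(m+n-k) with
   2 <= k <= min(m, n): for outfix-guided insertion k = |u| + |v|, for the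
   2-overlap catenation k = |v|. *)

Section UnaryWords.
Variables (T : eqType) (a : T).

Lemma unary_eq (s t : seq T) :
  all (pred1 a) s -> all (pred1 a) t -> size s = size t -> s = t.
Proof. by move=> /all_pred1P -> /all_pred1P ->; rewrite !size_nseq => ->. Qed.

Lemma ogi_word_nseq m n (w : seq T) :
  ogi_word (nseq m a) (nseq n a) w <->
  exists2 k, 2 <= k <= minn m n & w = nseq (m + n - k) a.
Proof.
split.
- move=> [x1 [u [v [x2 [z [ex ey /eqP hu /eqP hv ->]]]]]].
  have /(congr1 size) := ex; have /(congr1 size) := ey.
  move: hu hv; rewrite !size_cat !size_nseq -!size_eq0 => hu hv sn sm.
  have := all_pred1_nseq a m; have := all_pred1_nseq a n.
  rewrite ex ey !all_cat => /and3P[_ hz _] /and4P[h1 hu' hv' h2].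
  exists (size u + size v); first by apply/andP; split; lia.
  apply: unary_eq; first by rewrite !all_cat h1 hu' hz hv' h2.
    exact: all_pred1_nseq.
  by rewrite size_nseq !size_cat; lia.
- move=> [k /andP[k2 kmn] ->].
  have v0 : nseq (k - 1) a <> [::].
    by move/(congr1 size); rewrite size_nseq /=; lia.
  exists (nseq (m - k) a), [:: a], (nseq (k - 1) a), [::], (nseq (n - k) a).
  split => //; apply: unary_eq;
    rewrite ?all_cat ?all_pred1_nseq ?size_cat ?size_nseq /= ?eqxx //; lia.
Qed.

Lemma oc2_word_nseq m n (w : seq T) :
  oc2_word (nseq m a) (nseq n a) w <->
  exists2 k, 2 <= k <= minn m n & w = nseq (m + n - k) a.
Proof.
split.
- move=> [u [v [w' [ex ey hv ->]]]].
  have /(congr1 size) := ex; have /(congr1 size) := ey.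
  rewrite !size_cat !size_nseq => sn sm.
  have := all_pred1_nseq a m; have := all_pred1_nseq a n.
  rewrite ex ey !all_cat => /andP[hv' hw'] /andP[hu _].
  exists (size v); first by apply/andP; split; lia.
  apply: unary_eq; first by rewrite !all_cat hu hv' hw'.
    exact: all_pred1_nseq.
  by rewrite size_nseq !size_cat; lia.
- move=> [k /andP[k2 kmn] ->].
  exists (nseq (m - k) a), (nseq k a), (nseq (n - k) a).
  split; rewrite ?size_nseq //; apply: unary_eq;
    rewrite ?all_cat ?all_pred1_nseq // !size_cat !size_nseq; lia.
Qed.

Lemma ogi_word_oc2_word_nseq m n (w : seq T) :
  ogi_word (nseq m a) (nseq n a) w <-> oc2_word (nseq m a) (nseq n a) w.
Proof. by rewrite ogi_word_nseq oc2_word_nseq. Qed.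

Variables (L : lang T) (L_unary : forall w, L w -> all (pred1 a) w).

Lemma OC2_iter_unary i w : OC2_iter L i w -> all (pred1 a) w.
Proof.
elim: i w => [|i IH] w /=; first exact: L_unary.
move=> [x [y [/IH/all_pred1P ex /IH/all_pred1P ey]]].
rewrite ex ey => /oc2_word_nseq[k _ ->]; exact: all_pred1_nseq.
Qed.

Lemma OGI_iter_OC2_iter i w : OGI_iter L i w <-> OC2_iter L i w.
Proof.
elim: i w => [//|i IH] w /=.
have nseqE u : OC2_iter L i u -> u = nseq (size u) a.
  by move/OC2_iter_unary/all_pred1P.
split=> -[x [y [hx hy hw]]]; exists x, y.
- move/IH: hx => hx; move/IH: hy => hy; split=> //.
  by move: hw; rewrite (nseqE _ hx) (nseqE _ hy) ogi_word_oc2_word_nseq.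
- split; [exact/IH | exact/IH |].
  by move: hw; rewrite (nseqE _ hx) (nseqE _ hy) ogi_word_oc2_word_nseq.
Qed.

End UnaryWords.

Theorem corollary4p9 (T : eqType) (a : T) (L : lang T)
  (hunary : forall w, L w -> all (fun c => c == a) w) :
  forall w, OGI_star L w <-> OC2_star L w.
Proof.
move=> w; have E := @OGI_iter_OC2_iter T a L hunary.
by split=> -[i h]; exists i; apply/E.
Qed.
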